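(* Let $m\ge 1$, $q\ge 1$, and let $(A_0,\ldots,A_q)$ be a symmetric Clifford system on $\mathbb{R}^{2m}$. Define the cubic polynomial on $\mathbb{R}^{2m}\oplus\mathbb{R}^{q+1}$ $$\Phi(x):=y^{T}A_z y=\sum_{i=0}^q z_i\, y^T A_i y,\qquad x=(y,z)\in\mathbb{R}^{2m}\oplus\mathbb{R}^{q+1},$$ where $A_z:=\sum_{i=0}^q z_iA_i$. Then $\Phi$ is a radial minimal cubic; more precisely, $$L(\Phi)=-8|x|^2\,\Phi,$$ where $|x|^2=|y|^2+|z|^2$.
   Context: A (symmetric) Clifford system on $\mathbb{R}^{2m}$ with $q\ge1$ is a tuple $(A_0,\ldots,A_q)$ of symmetric linear endomorphisms (symmetric $2m\times 2m$ real matrices) satisfying $A_iA_j+A_jA_i=2\delta_{ij}I$ for all $0\le i,j\le q$, where $I$ is the identity. For a polynomial $f$ on $\mathbb{R}^n$, the operator $L$ is $L(f):=|\nabla f|^2\Delta f-\sum_{i,j=1}^n f_{x_i}f_{x_j}f_{x_ix_j}$. A homogeneous cubic polynomial $f$ is called a minimal cubic if $L(f)$ is divisible by $f$ in the polynomial ring, and a radial minimal cubic if $L(f)=c|x|^2 f$ for some constant $c\in\mathbb{R}$. *)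

From HB Require Import structures.
From mathcomp Require Import all_boot all_order all_algebra.
From mathcomp Require Import mpoly.
Set Implicit Arguments. Unset Strict Implicit. Unset Printing Implicit Defensive.
Import Order.TTheory GRing.Theory Num.Theory.
Local Open Scope ring_scope.

Definition clifford_system (R : realFieldType) (m q : nat)
  (A : 'I_q.+1 -> 'M[R]_(m.*2)) : Prop :=
  (forall i, (A i)^T = A i) /\
  (forall i j, A i *m A j + A j *m A i = ((i == j)%:R * 2) *: 1%:M).

Definition Lop (R : realFieldType) (n : nat) (f : {mpoly R[n]}) : {mpoly R[n]} :=
  (\sum_(i < n) (f^`M(i)) ^+ 2) * (\sum_(i < n) (f^`M(i))^`M(i))
  - \sum_(i < n) \sum_(j < n) f^`M(i) * f^`M(j) * (f^`M(i))^`M(j).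

Definition normsq (R : realFieldType) (n : nat) : {mpoly R[n]} :=
  \sum_(i < n) 'X_i ^+ 2.

Definition minimal_cubic (R : realFieldType) (n : nat) (f : {mpoly R[n]}) : Prop :=
  f \is 3.-homog /\ exists g : {mpoly R[n]}, Lop f = g * f.

Definition radial_minimal_cubic (R : realFieldType) (n : nat) (f : {mpoly R[n]}) : Prop :=
  f \is 3.-homog /\ exists c : R, Lop f = c *: (@normsq R n * f).

(* Phi(y,z) = sum_i z_i y^T A_i y on R^(2m) (+) R^(q+1);
   coordinates y_a = 'X_(lshift _ a), z_i = 'X_(rshift _ i). *)
Definition Phi (R : realFieldType) (m q : nat) (A : 'I_q.+1 -> 'M[R]_(m.*2))
  : {mpoly R[m.*2 + q.+1]} :=
  \sum_(i < q.+1) 'X_(rshift m.*2 i) *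
     \sum_(a < m.*2) \sum_(b < m.*2)
        (A i a b)%:MP * 'X_(lshift q.+1 a) * 'X_(lshift q.+1 b).

From HB Require Import structures.
From mathcomp Require Import all_boot all_order all_algebra.
From mathcomp Require Import mpoly.
From mathcomp Require Import ring.
Import Order.TTheory GRing.Theory Num.Theory.
Local Open Scope ring_scope.
Set Implicit Arguments. Unset Strict Implicit. Unset Printing Implicit Defensive.

(* Write Phi = y^T A_z y with A_z = sum_i z_i A_i, so that A_z^2 = |z|^2 and
   y^T A_i A_j y = delta_ij |y|^2 by the Clifford relations.  The gradient is
   (2 A_z y, (y^T A_i y)_i) and the Hessian has blocks 2 A_z, 2 A_i y and 0.
   The Laplacian is 2 tr A_z = 0, since every A_i anticommutes with an
   involution A_j (here q >= 1 is used).  In the contraction of the Hessian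
   with the gradient, the y-y block gives 8 y^T A_z^3 y = 8 |z|^2 Phi and the
   two mixed blocks give 8 sum_(i,j) z_j (y^T A_j A_i y) (y^T A_i y) =
   8 |y|^2 Phi; hence L(Phi) = -8 |x|^2 Phi. *)

Lemma mderivX1 (R : nzRingType) n (i j : 'I_n) :
  ('X_j : {mpoly R[n]})^`M(i) = (j == i)%:R.
Proof.
rewrite mderivX mnm1E; case: eqP => [->|_]; last by rewrite scale0r.
have -> : (U_(i) - U_(i))%MM = 0%MM.
  by apply/mnmP => k; rewrite mnmBE mnm0E subnn.
by rewrite mpolyX0 scale1r.
Qed.

Lemma mderiv_sum (R : nzRingType) n (i : 'I_n) (I : finType)
    (F : I -> {mpoly R[n]}) :
  (\sum_k F k)^`M(i) = \sum_k (F k)^`M(i).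
Proof. exact: raddf_sum. Qed.

Lemma sum_delta_mull (S : pzSemiRingType) k (c : 'I_k) (F : 'I_k -> S) :
  \sum_(a < k) (a == c)%:R * F a = F c.
Proof.
rewrite (bigD1 c) //= eqxx mul1r big1 ?addr0 // => a /negbTE ->.
by rewrite mul0r.
Qed.

Lemma mulrn2_inj (S : pzRingType) (V : lmodType S) (h : S) :
  h * 2%:R = 1 -> injective (fun v : V => v *+ 2).
Proof.
move=> h2 v w /(congr1 (fun u => h *: u)) /=.
by rewrite -!scaler_nat !scalerA h2 !scale1r.
Qed.

Lemma mxtrace_anticomm_eq0 (R : numDomainType) n (B C : 'M[R]_n) :
  B *m C + C *m B = 0 -> C *m C = 1%:M -> \tr B = 0.
Proof.
move=> anti invC.
have CB : C *m B = - (B *m C) by apply/eqP; rewrite -addr_eq0 addrC anti.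
have t_opp : \tr (B *m C *m C) = - \tr (B *m C *m C).
  by rewrite {1}mxtrace_mulC mulmxA CB mulNmx raddfN.
have : \tr (B *m C *m C) *+ 2 = 0 by rewrite mulr2n {1}t_opp addNr.
by rewrite -mulmxA invC mulmx1 => /eqP; rewrite mulrn_eq0 => /eqP.
Qed.

Lemma inv2_mul2 (F : numFieldType) : (2^-1 : F) * 2%:R = 1.
Proof. by rewrite mulVf ?pnatr_eq0. Qed.

Lemma mxquad_sum (S : comPzRingType) n (u : 'cV[S]_n) (M : 'M[S]_n) :
  (u^T *m M *m u) 0 0 = \sum_c \sum_d u c 0 * u d 0 * M c d.
Proof.
rewrite mxE exchange_big; apply: eq_bigr => d _ /=.
rewrite !mxE mulr_suml; apply: eq_bigr => c _; rewrite !mxE; ring.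
Qed.

Lemma mxquad_tr (S : comPzRingType) n (u : 'cV[S]_n) (M : 'M[S]_n) :
  (u^T *m M^T *m u) 0 0 = (u^T *m M *m u) 0 0.
Proof.
rewrite !mxquad_sum exchange_big; apply: eq_bigr => c _; apply: eq_bigr => d _.
by rewrite mxE; ring.
Qed.

Lemma Phi_homog (R : realFieldType) m q (A : 'I_q.+1 -> 'M[R]_(m.*2)) :
  Phi A \is 3.-homog.
Proof.
have X_homog n (i : 'I_n) : ('X_i : {mpoly R[n]}) \is 1.-homog.
  by rewrite dhomogX; apply/eqP; apply: mdeg1.
apply: rpred_sum => i _; apply: (dhomogM (d := 1%N) (e := 2%N)) => //.
apply: rpred_sum => a _; apply: rpred_sum => b _.
rewrite -mulrA mul_mpolyC; apply: dhomogZ.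
exact: (dhomogM (d := 1%N) (e := 1%N)).
Qed.

Section CliffordCubic.
Variables (R : realFieldType) (m q : nat) (A : 'I_q.+1 -> 'M[R]_(m.*2)).
Hypothesis A_sym : forall i, (A i)^T = A i.
Hypothesis A_clifford :
  forall i j, A i *m A j + A j *m A i = ((i == j)%:R * 2) *: 1%:M.

Lemma A_symE i a b : A i a b = A i b a.
Proof. by rewrite -{1}A_sym mxE. Qed.

Lemma A_sqr j : A j *m A j = 1%:M.
Proof.
apply: (mulrn2_inj (inv2_mul2 R)); rewrite /= mulr2n A_clifford eqxx mul1r.
by rewrite scaler_nat.
Qed.

Lemma A_anticomm i j : i != j -> A i *m A j + A j *m A i = 0.
Proof. by move=> /negbTE ij; rewrite A_clifford ij mul0r scale0r. Qed.

Lemma A_trace : (1 <= q)%N -> forall i, \tr (A i) = 0.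
Proof.
move=> q_gt0 i; pose j : 'I_q.+1 := if i == ord0 then inord 1 else ord0.
have ij : i != j.
  rewrite /j; case: (i =P ord0) => [->|/eqP //].
  by apply/eqP => /(congr1 val) /=; rewrite inordK // ltnS.
exact: mxtrace_anticomm_eq0 (A_anticomm ij) (A_sqr j).
Qed.

Local Notation N := (m.*2 + q.+1)%N.
Local Notation P := {mpoly R[N]}.
Local Notation yidx a := (lshift q.+1 a).
Local Notation zidx i := (rshift m.*2 i).

Definition yvar a : P := 'X_(yidx a).
Definition zvar i : P := 'X_(zidx i).
Definition normY : P := \sum_a yvar a ^+ 2.
Definition normZ : P := \sum_i zvar i ^+ 2.

Definition Ay i c : P := \sum_b (A i c b)%:MP * yvar b.
Definition yAy i : P := \sum_a \sum_b (A i a b)%:MP * yvar a * yvar b.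
Definition gradY c : P := (\sum_i zvar i * Ay i c) *+ 2.

Lemma Phi_sum : Phi A = \sum_i zvar i * yAy i.
Proof. by []. Qed.

Lemma normsq_split : normsq R N = normY + normZ.
Proof. by rewrite /normsq big_split_ord. Qed.

Lemma yAy_sum i : yAy i = \sum_a yvar a * Ay i a.
Proof.
apply: eq_bigr => a _; rewrite /Ay mulr_sumr; apply: eq_bigr => b _; ring.
Qed.

Lemma mderiv_yvar_y a d : (yvar a)^`M(yidx d) = (a == d)%:R.
Proof. by rewrite mderivX1 (inj_eq (@lshift_inj _ _)). Qed.

Lemma mderiv_yvar_z a j : (yvar a)^`M(zidx j) = 0.
Proof. by rewrite mderivX1 eq_lrshift. Qed.

Lemma mderiv_zvar_y i d : (zvar i)^`M(yidx d) = 0.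
Proof. by rewrite mderivX1 eq_rlshift. Qed.

Lemma mderiv_zvar_z i j : (zvar i)^`M(zidx j) = (i == j)%:R.
Proof. by rewrite mderivX1 (inj_eq (@rshift_inj _ _)). Qed.

Lemma mderiv_Ay_y i c d : (Ay i c)^`M(yidx d) = (A i c d)%:MP.
Proof.
rewrite /Ay mderiv_sum.
under eq_bigr do rewrite mderivM mderivC mderiv_yvar_y mul0r add0r mulrC.
exact: sum_delta_mull.
Qed.

Lemma mderiv_Ay_z i c j : (Ay i c)^`M(zidx j) = 0.
Proof.
rewrite /Ay mderiv_sum big1 // => b _.
by rewrite mderivM mderivC mderiv_yvar_z mul0r mulr0 addr0.
Qed.

Lemma mderiv_yAy_y i d : (yAy i)^`M(yidx d) = Ay i d *+ 2.
Proof.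
rewrite yAy_sum mderiv_sum.
under eq_bigr do rewrite mderivM mderiv_yvar_y mderiv_Ay_y.
rewrite big_split /= sum_delta_mull mulr2n; congr (_ + _).
by apply: eq_bigr => a _; rewrite mulrC A_symE.
Qed.

Lemma mderiv_yAy_z i j : (yAy i)^`M(zidx j) = 0.
Proof.
rewrite yAy_sum mderiv_sum big1 // => a _.
by rewrite mderivM mderiv_yvar_z mderiv_Ay_z mul0r mulr0 addr0.
Qed.

Lemma mderiv_Phi_y c : (Phi A)^`M(yidx c) = gradY c.
Proof.
rewrite Phi_sum mderiv_sum /gradY -sumrMnl; apply: eq_bigr => i _.
by rewrite mderivM mderiv_zvar_y mderiv_yAy_y mul0r add0r mulrnAr.
Qed.

Lemma mderiv_Phi_z j : (Phi A)^`M(zidx j) = yAy j.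
Proof.
rewrite Phi_sum mderiv_sum.
under eq_bigr do rewrite mderivM mderiv_zvar_z mderiv_yAy_z mulr0 addr0.
exact: sum_delta_mull.
Qed.



Definition mxC (M : 'M[R]_(m.*2)) : 'M[P]_(m.*2) := map_mx (@mpolyC N R) M.
Definition yvec : 'cV[P]_(m.*2) := \col_a yvar a.
Definition Az : 'M[P]_(m.*2) := \sum_i zvar i *: mxC (A i).

Lemma Az_entry c d : Az c d = \sum_i zvar i * (A i c d)%:MP.
Proof. by rewrite summxE; apply: eq_bigr => i _; rewrite !mxE. Qed.

Lemma Az_tr : Az^T = Az.
Proof.
apply/matrixP => a b; rewrite mxE !Az_entry.
by apply: eq_bigr => i _; rewrite A_symE.
Qed.

Lemma Az_sqr : Az *m Az = normZ%:M.
Proof.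
have -> : Az *m Az = \sum_i \sum_j (zvar i * zvar j) *: mxC (A i *m A j).
  rewrite mulmx_suml; apply: eq_bigr => i _; rewrite mulmx_sumr.
  apply: eq_bigr => j _.
  by rewrite -scalemxAl -scalemxAr scalerA /mxC map_mxM.
apply: (mulrn2_inj (h := (2^-1)%:MP)).
  by rewrite -mpolyC_nat -mpolyCM inv2_mul2.
rewrite /= mulr2n {1}exchange_big -big_split /=.
under eq_bigr => i _.
  rewrite -big_split /=.
  under eq_bigr => j _ do
    rewrite [zvar j * zvar i]mulrC -scalerDr /mxC -map_mxD A_clifford scalemx1
            map_scalar_mx scale_scalar_mx.
  over.
rewrite /normZ -raddfMn -sumrMnl raddf_sum; apply: eq_bigr => i _ /=.
rewrite -raddf_sum; congr (_%:M).
rewrite (bigD1 i) //= big1 => [|j /negbTE]; last first.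
  by rewrite eq_sym => ->; rewrite mul0r rmorph0 mulr0.
by rewrite addr0 eqxx mul1r rmorph_nat mulr_natr expr2.
Qed.

Lemma Az_trace : (1 <= q)%N -> \tr Az = 0.
Proof.
move=> q_gt0; rewrite /Az raddf_sum /= big1 // => i _.
by rewrite mxtraceZ trace_map_mx A_trace // rmorph0 mulr0.
Qed.

Lemma Ay_mx i c : Ay i c = (mxC (A i) *m yvec) c 0.
Proof. by rewrite mxE; apply: eq_bigr => b _; rewrite !mxE. Qed.

Lemma gradY_mx c : gradY c = (Az *m yvec) c 0 *+ 2.
Proof.
congr (_ *+ 2); rewrite mulmx_suml summxE; apply: eq_bigr => i _.
by rewrite -scalemxAl mxE Ay_mx.
Qed.

Lemma yvec_norm : (yvec^T *m yvec) 0 0 = normY.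
Proof. by rewrite mxE; apply: eq_bigr => a _; rewrite !mxE expr2. Qed.

Lemma Phi_mx : Phi A = (yvec^T *m Az *m yvec) 0 0.
Proof.
rewrite mxquad_sum Phi_sum.
under eq_bigr do rewrite mulr_sumr.
rewrite exchange_big; apply: eq_bigr => a _ /=.
under eq_bigr do rewrite mulr_sumr.
rewrite exchange_big; apply: eq_bigr => b _ /=.
rewrite Az_entry !mxE mulr_sumr; apply: eq_bigr => i _; ring.
Qed.

Lemma Ay_dot i j : \sum_c Ay i c * Ay j c = (i == j)%:R * normY.
Proof.
have -> : \sum_c Ay i c * Ay j c = (yvec^T *m mxC (A i *m A j) *m yvec) 0 0.
  have -> : yvec^T *m mxC (A i *m A j) *m yvec
      = (mxC (A i) *m yvec)^T *m (mxC (A j) *m yvec).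
    by rewrite trmx_mul /mxC map_trmx A_sym map_mxM !mulmxA.
  by rewrite mxE; apply: eq_bigr => c _; rewrite !Ay_mx [_^T _ _]mxE.
apply: (mulrn2_inj (inv2_mul2 R)) => /=.
rewrite mulr2n -{2}mxquad_tr /mxC map_trmx trmx_mul !A_sym.
have addE (B C : 'M[P]_1) : B 0 0 + C 0 0 = (B + C) 0 0 by rewrite mxE.
rewrite addE -mulmxDl -mulmxDr -map_mxD A_clifford scalemx1 map_scalar_mx.
rewrite mul_mx_scalar -scalemxAl mxE yvec_norm rmorphM !rmorph_nat.
by rewrite mulr_natr mulrnAl.
Qed.

Lemma mderiv_gradY_y c d : (gradY c)^`M(yidx d) = Az c d *+ 2.
Proof.
rewrite /gradY mderivMn mderiv_sum Az_entry; congr (_ *+ 2).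
by apply: eq_bigr => i _; rewrite mderivM mderiv_zvar_y mderiv_Ay_y mul0r add0r.
Qed.

Lemma mderiv_gradY_z c j : (gradY c)^`M(zidx j) = Ay j c *+ 2.
Proof.
rewrite /gradY mderivMn mderiv_sum; congr (_ *+ 2).
under eq_bigr do rewrite mderivM mderiv_zvar_z mderiv_Ay_z mulr0 addr0.
exact: sum_delta_mull.
Qed.

Lemma contraction_yy :
  \sum_c \sum_d gradY c * gradY d * (Az c d *+ 2) = 8%:R * normZ * Phi A.
Proof.
have -> : \sum_c \sum_d gradY c * gradY d * (Az c d *+ 2)
    = 8%:R * ((Az *m yvec)^T *m Az *m (Az *m yvec)) 0 0.
  rewrite mxquad_sum mulr_sumr; apply: eq_bigr => c _; rewrite mulr_sumr.
  by apply: eq_bigr => d _; rewrite !gradY_mx; ring.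
rewrite trmx_mul Az_tr !mulmxA -(mulmxA _ Az Az) Az_sqr mul_mx_scalar.
by rewrite -scalemxAl mxE -Phi_mx mulrA.
Qed.

Lemma gradY_dot_Ay j : \sum_c gradY c * Ay j c = (zvar j * normY) *+ 2.
Proof.
rewrite /gradY; under eq_bigr do rewrite mulrnAl.
rewrite sumrMnl; congr (_ *+ 2).
under eq_bigr do rewrite mulr_suml.
rewrite exchange_big /=.
under eq_bigr do
  rewrite -(eq_bigr _ (fun c _ => mulrA _ _ _)) -mulr_sumr Ay_dot.
rewrite (eq_bigr (fun i => (i == j)%:R * (zvar i * normY))) => [|i _]; last first.
  by rewrite mulrCA.
exact: sum_delta_mull.
Qed.

Lemma contraction_yz :
  \sum_c \sum_j gradY c * yAy j * (Ay j c *+ 2) = 4%:R * normY * Phi A.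
Proof.
rewrite exchange_big Phi_sum mulr_sumr; apply: eq_bigr => j _ /=.
have -> : \sum_c gradY c * yAy j * (Ay j c *+ 2)
    = (yAy j * \sum_c gradY c * Ay j c) *+ 2.
  rewrite mulr_sumr -sumrMnl; apply: eq_bigr => c _; ring.
rewrite gradY_dot_Ay; ring.
Qed.

Lemma Phi_laplacian : (1 <= q)%N -> \sum_(k < N) (Phi A)^`M(k)^`M(k) = 0.
Proof.
move=> q_gt0; rewrite big_split_ord /= [X in _ + X]big1 => [|j _]; last first.
  by rewrite mderiv_Phi_z mderiv_yAy_z.
under eq_bigr do rewrite mderiv_Phi_y mderiv_gradY_y.
have := Az_trace q_gt0; rewrite /mxtrace => tr0.
by rewrite addr0 sumrMnl tr0 mul0rn.
Qed.

Lemma Phi_hessian_contraction :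
  \sum_(k < N) \sum_(l < N) (Phi A)^`M(k) * (Phi A)^`M(l) * (Phi A)^`M(k)^`M(l)
  = 8%:R * normsq R N * Phi A.
Proof.
have row_y c :
    \sum_(l < N) (Phi A)^`M(yidx c) * (Phi A)^`M(l) * (Phi A)^`M(yidx c)^`M(l)
    = \sum_d gradY c * gradY d * (Az c d *+ 2)
      + \sum_j gradY c * yAy j * (Ay j c *+ 2).
  rewrite big_split_ord; congr (_ + _); apply: eq_bigr => l _.
    by rewrite !mderiv_Phi_y mderiv_gradY_y.
  by rewrite mderiv_Phi_y mderiv_Phi_z mderiv_gradY_z.
have row_z j :
    \sum_(l < N) (Phi A)^`M(zidx j) * (Phi A)^`M(l) * (Phi A)^`M(zidx j)^`M(l)
    = \sum_c yAy j * gradY c * (Ay j c *+ 2).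
  rewrite big_split_ord /= [X in _ + X]big1 ?addr0 => [|k _].
    by apply: eq_bigr => c _; rewrite mderiv_Phi_y mderiv_Phi_z mderiv_yAy_y.
  by rewrite !mderiv_Phi_z mderiv_yAy_z mulr0.
rewrite big_split_ord (eq_bigr _ (fun c _ => row_y c)).
rewrite (eq_bigr _ (fun j _ => row_z j)).
rewrite big_split /= contraction_yy contraction_yz.
have -> : \sum_j \sum_c yAy j * gradY c * (Ay j c *+ 2) = 4%:R * normY * Phi A.
  rewrite -contraction_yz exchange_big; apply: eq_bigr => c _.
  by apply: eq_bigr => j _; rewrite [yAy j * _]mulrC.
rewrite normsq_split; ring.
Qed.

Lemma Lop_Phi : (1 <= q)%N -> Lop (Phi A) = (-8) *: (normsq R N * Phi A).
Proof.
move=> q_gt0; rewrite /Lop Phi_laplacian // mulr0 sub0r Phi_hessian_contraction.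
rewrite -mul_mpolyC rmorphN rmorph_nat; ring.
Qed.

End CliffordCubic.

Unset Implicit Arguments.

Theorem theorem1 (R : realFieldType) (m q : nat) (A : 'I_q.+1 -> 'M[R]_(m.*2)) :
  (1 <= m)%N -> (1 <= q)%N -> clifford_system A ->
  radial_minimal_cubic (Phi A) /\
  Lop (Phi A) = (-8) *: (@normsq R (m.*2 + q.+1) * Phi A).
Proof.
move=> _ q_gt0 [A_sym A_clifford].
have LPhi := Lop_Phi A_sym A_clifford q_gt0.
by split=> //; split; [exact: Phi_homog | exists (-8)].
Qed.
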